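(* Let $f(x)=B_0+B^\top x$ with $B_0\in\mathbb R^m$, $B\in\mathbb R^{n\times m}$, and let $X\sim\mathcal N(\mu,\Sigma)$ with $\Sigma\in\mathbb R^{n\times n}$ symmetric positive definite. For $S\subseteq[n]$ let $A_S=\Sigma_{:,S}\Sigma_{S,S}^{-1}\in\mathbb R^{n\times|S|}$ and let $\widehat A_S\in\mathbb R^{n\times n}$ be obtained by placing the columns of $A_S$ in the positions indexed by $S$ and zeros in the columns outside $S$ (so $\widehat A_\varnothing=0$). For $i\in[n]$ set $$M_i(\Sigma)=\sum_{S\subseteq[n]\setminus\{i\}}\frac{|S|!(n-|S|-1)!}{n!}\big(\widehat A_{S\cup\{i\}}-\widehat A_S\big)\in\mathbb R^{n\times n}.$$ Then for every $x\in\mathbb R^n$ and $i\in[n]$, $\phi_i(f;x)=B^\top M_i(\Sigma)(x-\mu)\in\mathbb R^m$.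
   Context: For $S\subseteq[n]=\{1,\dots,n\}$, $X_S,x_S,\mu_S$ denote subvectors indexed by $S$; $\Sigma_{S,S}$ is the principal submatrix of $\Sigma$ indexed by $S$ and $\Sigma_{:,S}$ the $n\times|S|$ submatrix of columns indexed by $S$. Define $v_f(S)=\mathbb E[f(X)\mid X_S=x_S]-\mathbb E[f(X)]\in\mathbb R^m$ (with $\mathbb E[f(X)\mid X_\varnothing]=\mathbb E[f(X)]$), and the SHAP value $\phi_i(f;x)=\sum_{S\subseteq[n]\setminus\{i\}}\frac{|S|!(n-|S|-1)!}{n!}(v_f(S\cup\{i\})-v_f(S))$. *)

From HB Require Import structures.
From mathcomp Require Import all_boot all_order all_algebra.
From mathcomp Require Import all_classical all_reals all_analysis.
Set Implicit Arguments. Unset Strict Implicit. Unset Printing Implicit Defensive.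
Import Order.TTheory GRing.Theory Num.Theory.
Local Open Scope ring_scope.

Section Defs.
Variables (R : realType) (n : nat).

Definition spd (Sigma : 'M[R]_n) : Prop :=
  Sigma^T = Sigma /\ forall v : 'cV[R]_n, v != 0 -> 0 < (v^T *m Sigma *m v) 0 0.

Definition gauss_pdf (mu : 'cV[R]_n) (Sigma : 'M[R]_n) (x : 'cV[R]_n) : R :=
  expR (- (((x - mu)^T *m invmx Sigma *m (x - mu)) 0 0) / 2)
  / Num.sqrt ((2 * pi) ^+ n * \det Sigma).

Definition setcoord (x : 'cV[R]_n) (j : 'I_n) (t : R) : 'cV[R]_n :=
  \col_k (if k == j then t else x k 0).

Fixpoint iterint (l : seq 'I_n) (g : 'cV[R]_n -> R) (x : 'cV[R]_n) : R :=
  match l with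
  | [::] => g x
  | j :: l' => Rintegral lebesgue_measure setT (fun t => iterint l' g (setcoord x j t))
  end.

(* E[g(X) | X_S = x_S] for X ~ N(mu, Sigma), via the conditional density
   p(x_S, y) / int p(x_S, y) dy  (y ranging over the coordinates outside S).
   For S = set0 this is E[g(X)] (the denominator is the total mass 1). *)
Definition gauss_condexp (mu : 'cV[R]_n) (Sigma : 'M[R]_n) (S : {set 'I_n})
    (g : 'cV[R]_n -> R) (x : 'cV[R]_n) : R :=
  iterint (enum (~: S)) (fun y => g y * gauss_pdf mu Sigma y) x
  / iterint (enum (~: S)) (gauss_pdf mu Sigma) x.

Definition vf (m : nat) (mu : 'cV[R]_n) (Sigma : 'M[R]_n)
    (f : 'cV[R]_n -> 'cV[R]_m) (x : 'cV[R]_n) (S : {set 'I_n}) : 'cV[R]_m :=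
  \col_k (gauss_condexp mu Sigma S (fun y => f y k 0) x
          - gauss_condexp mu Sigma finset.set0 (fun y => f y k 0) x).

Definition shap_weight (s : nat) : R := ((s`! * (n - s - 1)`!)%:R / (n`!)%:R).

Definition shap (m : nat) (mu : 'cV[R]_n) (Sigma : 'M[R]_n)
    (f : 'cV[R]_n -> 'cV[R]_m) (x : 'cV[R]_n) (i : 'I_n) : 'cV[R]_m :=
  \sum_(S : {set 'I_n} | i \notin S)
     shap_weight #|S| *: (vf mu Sigma f x (i |: S) - vf mu Sigma f x S).

Definition selmx (S : {set 'I_n}) : 'M[R]_(n, #|S|) :=
  \matrix_(i, k) (i == enum_val k)%:R.

(* hat A_S = Sigma_{:,S} Sigma_{S,S}^{-1}, columns placed at positions S *)
Definition Ahat (Sigma : 'M[R]_n) (S : {set 'I_n}) : 'M[R]_n :=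
  (Sigma *m selmx S) *m invmx ((selmx S)^T *m Sigma *m selmx S) *m (selmx S)^T.

Definition Mi (Sigma : 'M[R]_n) (i : 'I_n) : 'M[R]_n :=
  \sum_(S : {set 'I_n} | i \notin S)
     shap_weight #|S| *: (Ahat Sigma (i |: S) - Ahat Sigma S).

End Defs.

(* Integrating a Gaussian kernel exp(-q(y)/2) times an affine function of y over
   one coordinate j gives, by completing the square, a constant times an affine
   function times the Gaussian kernel of the Schur complement of q at j.
   Iterating over the coordinates outside S, the numerator and the denominator of
   E[f(X) | X_S = x_S] acquire the same constant and Gaussian factor, so for
   affine f the conditional expectation is f (mu + v), where v agrees with x - mu
   on S and Sigma^-1 v vanishes off S; that v is Ahat_S (x - mu). Hence
   v_f(S) = B^T (Ahat_S - Ahat_0) (x - mu), and the SHAP value is linear in the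
   matrices Ahat_S. *)

From HB Require Import structures.
From mathcomp Require Import all_boot all_order all_algebra.
From mathcomp Require Import all_classical all_reals all_analysis.
From mathcomp Require Import measurable_realfun ring lra.
Set Implicit Arguments. Unset Strict Implicit. Unset Printing Implicit Defensive.
Import Order.TTheory GRing.Theory Num.Theory.
Import numFieldNormedType.Exports.
Local Open Scope classical_set_scope.
Local Open Scope ring_scope.

Section GaussianIntegrals.
Variable R : realType.
Local Notation mu := (@lebesgue_measure R).
Implicit Types (c d t : R) (f : R -> R).

Lemma ge0_integral_shift f (e : R) : continuous f -> (forall t, 0 <= f t) ->
  (\int[mu]_t (f t)%:E = \int[mu]_t (f (t + e))%:E)%E.
Proof.
move=> cf f0.
have dE : (fun t : R => t + e)^`()%classic = cst 1.
  by apply/funext => t; rewrite derive1E deriveD// derive_id derive_cst addr0.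
rewrite (@increasing_ge0_integration_by_substitutionT _ (fun t => t + e) f); last 9 first.
- by move=> t s ts; rewrite ltrD2r.
- by rewrite dE; exact: cst_continuous.
- by rewrite dE; exact: is_cvg_cst.
- by rewrite dE; exact: is_cvg_cst.
- by move=> t; exact: derivableD.
- exact: cvg_addrr_Ny.
- exact: cvg_addrr.
- exact: cf.
- exact: f0.
by apply: eq_integral => t _; rewrite dE /= mulr1.
Qed.

Lemma ge0_integral_reflect f (a : R) : continuous f -> (forall t, 0 <= f t) ->
  (\int[mu]_t (f t)%:E = \int[mu]_t (f (a - t))%:E)%E.
Proof.
move=> cf f0.
have cfN : continuous (fun t => f (- t)).
  by move=> t; apply: continuous_comp; [exact: continuousN | exact: cf].
have halves (g : R -> R) : continuous g -> (forall t, 0 <= g t) ->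
    (\int[mu]_t (g t)%:E = \int[mu]_(t in [set t | (0 <= t)%R]) (g t)%:E
                         + \int[mu]_(t in [set t | (0 <= t)%R]) (g (- t))%:E)%E.
  move=> cg g0; have mg : measurable_fun [set: R] g by exact: continuous_measurable_fun.
  have mge0 : measurable [set t : R | 0 <= t] by rewrite -set_itvcy.
  rewrite -(setUv [set t : R | 0 <= t]) ge0_integral_setU//= ; last 4 first.
  - exact: measurableC.
  - by apply/measurable_EFinP; rewrite setUv.
  - by move=> t _; rewrite lee_fin.
  - exact/disj_setPCl.
  congr (_ + _)%E; rewrite -set_itvcy// setCitvr.
  rewrite integral_itv_bndo_bndc; last exact/measurable_EFinP/measurable_funTS.
  by rewrite -{1}oppr0 ge0_integration_by_substitutionNy//; exact: continuous_subspaceT.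
apply: (@etrans _ _ (\int[mu]_t (f (- t))%:E)%E).
  rewrite (halves f)// (halves (fun t => f (- t)))// addeC.
  by congr (_ + _)%E; apply: eq_integral => t _; rewrite opprK.
rewrite (ge0_integral_shift (- a) cfN) => [|t]; last exact: f0.
by apply: eq_integral => t _; rewrite opprD opprK addrC.
Qed.

Definition gauss_fun c d t := expR (- (c * (t - d) ^+ 2) / 2).

Lemma gauss_fun_ge0 c d t : 0 <= gauss_fun c d t.
Proof. exact: expR_ge0. Qed.

Lemma continuous_gauss_fun c d : continuous (gauss_fun c d).
Proof.
move=> t; apply: (cvg_comp _ expR); last exact: continuous_expR.
apply: cvgM; last exact: cvg_cst.
apply: (@cvgN _ R^o); apply: cvgM; first exact: cvg_cst.
apply: (cvg_comp (fun t => t - d) (fun t => t ^+ 2)); last exact: sqr_continuous.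
by apply: (@cvgB _ R^o); [exact: cvg_id | exact: cvg_cst].
Qed.

Lemma gauss_fun_sym c d t : gauss_fun c d (d * 2 - t) = gauss_fun c d t.
Proof. by rewrite /gauss_fun; congr expR; congr (- (c * _) / 2); ring. Qed.

Definition gauss_mass c := (normal_peak (Num.sqrt c^-1))^-1.

Lemma gauss_mass_gt0 c : 0 < c -> 0 < gauss_mass c.
Proof.
by move=> c0; rewrite invr_gt0 normal_peak_gt0 // gt_eqF // sqrtr_gt0 invr_gt0.
Qed.

Lemma gauss_funE c d : 0 < c ->
  gauss_fun c d = fun t => gauss_mass c * normal_pdf d (Num.sqrt c^-1) t.
Proof.
move=> c0; have s0 : Num.sqrt c^-1 != 0 by rewrite gt_eqF // sqrtr_gt0 invr_gt0.
apply/funext => t; rewrite normal_pdfE // mulKf; last first.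
  by rewrite gt_eqF // normal_peak_gt0.
rewrite /gauss_fun /normal_fun sqr_sqrtr ?invr_ge0 ?ltW //; congr expR.
by rewrite -mulr_natr; field; rewrite gt_eqF.
Qed.

Lemma integrable_gauss_fun c d : 0 < c -> mu.-integrable setT (EFin \o gauss_fun c d).
Proof.
move=> c0; rewrite gauss_funE //.
apply: eq_integrable (integrableZl measurableT _ (integrable_normal_pdf d _)) => // t _.
Qed.

Lemma Rintegral_gauss_fun c d : 0 < c -> \int[mu]_(t in setT) gauss_fun c d t = gauss_mass c.
Proof.
move=> c0; rewrite gauss_funE // RintegralZl //; last exact: integrable_normal_pdf.
by rewrite /Rintegral integral_normal_pdf mulr1.
Qed.

(* The tail bound |s| <= (1 + 1/c) exp(c s^2 / 4) makes the first moment integrable. *)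
Lemma abs_gauss_fun_le c d t : 0 < c ->
  `|t - d| * gauss_fun c d t <= (1 + c^-1) * gauss_fun (c / 2) d t.
Proof.
move=> c0; rewrite /gauss_fun -[(t - d) ^+ 2]real_normK ?num_real //; set s := `|t - d|.
have -> : expR (- (c / 2 * s ^+ 2) / 2) = expR (- (c * s ^+ 2) / 2) * expR (c * s ^+ 2 / 4).
  by rewrite -expRD; congr expR; field.
set F := c * s ^+ 2 / 4.
rewrite [in leRHS]mulrCA [in leLHS]mulrC ler_pM2l ?expR_gt0 //.
have F0 : 0 <= F by rewrite divr_ge0 // mulr_ge0 ?sqr_ge0 // ltW.
have k0 : 0 < c^-1 by rewrite invr_gt0.
apply: (@le_trans _ _ ((1 + c^-1) * (1 + F))); last first.
  by rewrite ler_pM2l ?expR_ge1Dx // ltr_wpDr // ltW.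
have : s <= c^-1 + F.
  have e : c^-1 + F - s = c^-1 * (2 - c * s) ^+ 2 / 4 by rewrite /F; field; rewrite gt_eqF.
  by rewrite -subr_ge0 e divr_ge0 // mulr_ge0 ?sqr_ge0 // ltW.
have : 0 <= c^-1 * F by rewrite mulr_ge0 // ltW.
by move: k0 F0; set k := c^-1; nra.
Qed.

Lemma integrable_gauss_dominated f c d : 0 < c -> continuous f ->
  (forall t, `|f t| <= `|t - d| * gauss_fun c d t) -> mu.-integrable setT (EFin \o f).
Proof.
move=> c0 cf fle; have c20 : 0 < c / 2 by rewrite divr_gt0.
apply: (le_integrable measurableT _ _
  (integrableZl measurableT (1 + c^-1) (integrable_gauss_fun d c20))).
- by apply/measurable_EFinP; exact: continuous_measurable_fun.
- move=> t _ /=; rewrite lee_fin [X in _ <= X]ger0_norm.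
    exact: le_trans (fle t) (abs_gauss_fun_le _ _ c0).
  by rewrite mulr_ge0 ?gauss_fun_ge0 // addr_ge0 // invr_ge0 ltW.
Qed.

Lemma continuous_centered (d : R) : continuous (fun t : R => t - d).
Proof. by move=> t; apply: (@cvgB _ R^o); [exact: cvg_id | exact: cvg_cst]. Qed.

Lemma integrable_centered_gauss c d : 0 < c ->
  mu.-integrable setT (EFin \o fun t => (t - d) * gauss_fun c d t).
Proof.
move=> c0; apply: (integrable_gauss_dominated c0) => [t|t].
  by apply: cvgM; [exact: continuous_centered | exact: continuous_gauss_fun].
by rewrite normrM [`|gauss_fun _ _ _|]ger0_norm ?gauss_fun_ge0.
Qed.

Definition gauss_upper c d t := Num.max (t - d) 0 * gauss_fun c d t.

Lemma continuous_gauss_upper c d : continuous (gauss_upper c d).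
Proof.
have cmax : continuous ((fun t => t - d) \max cst 0).
  by apply: max_fun_continuous; [exact: continuous_centered | exact: cst_continuous].
by move=> t; apply: cvgM; [exact: cmax | exact: continuous_gauss_fun].
Qed.

Lemma gauss_upper_ge0 c d t : 0 <= gauss_upper c d t.
Proof. by rewrite mulr_ge0 ?gauss_fun_ge0 // le_max lexx orbT. Qed.

Lemma centered_gaussE c d t :
  (t - d) * gauss_fun c d t = gauss_upper c d t - gauss_upper c d (d * 2 - t).
Proof.
rewrite /gauss_upper gauss_fun_sym -mulrBl (_ : d * 2 - t - d = - (t - d)); last by ring.
congr (_ * _); case: (leP 0 (t - d)) => h.
  by rewrite max_r ?subr0 // oppr_le0.
by rewrite max_l ?sub0r ?opprK // oppr_ge0 ltW.
Qed.

(* The integrand is the upper part minus its mirror image about d, and the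
   reflection t |-> 2 d - t preserves the integral. *)
Lemma Rintegral_centered_gauss c d : 0 < c ->
  \int[mu]_(t in setT) ((t - d) * gauss_fun c d t) = 0.
Proof.
move=> c0; under eq_Rintegral do rewrite centered_gaussE.
rewrite RintegralB //; last 2 first.
- apply: (integrable_gauss_dominated (d := d) c0 (@continuous_gauss_upper c d)) => t.
  rewrite ger0_norm ?gauss_upper_ge0 // /gauss_upper ler_wpM2r ?gauss_fun_ge0 //.
  by rewrite ge_max normr_ge0 andbT real_ler_norm ?num_real.
- have cmirror : continuous (fun t : R => gauss_upper c d (d * 2 - t)).
    move=> t; apply: (continuous_comp (f := fun t : R => d * 2 - t) (g := gauss_upper c d)).
      by apply: (@cvgB _ R^o); [exact: cvg_cst | exact: cvg_id].
    exact: continuous_gauss_upper.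
  apply: (integrable_gauss_dominated (d := d) c0 cmirror) => t.
  rewrite ger0_norm ?gauss_upper_ge0 // /gauss_upper gauss_fun_sym.
  have -> : d * 2 - t - d = d - t by ring.
  by rewrite ler_wpM2r ?gauss_fun_ge0 // ge_max normr_ge0 andbT distrC real_ler_norm ?num_real.
rewrite /Rintegral -(ge0_integral_reflect (d * 2) (@continuous_gauss_upper c d)) ?subrr //.
exact: gauss_upper_ge0.
Qed.

(* Complete the square: c s^2 + 2 p s + r = c (s + p/c)^2 + (r - p^2/c). *)
Lemma Rintegral_affine_gauss c (h p r a b : R) : 0 < c ->
  \int[mu]_(t in setT) ((a + b * (t - h)) * expR (- (c * (t - h) ^+ 2 + 2 * p * (t - h) + r) / 2))
  = (a - b * p / c) * gauss_mass c * expR (- (r - p ^+ 2 / c) / 2).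
Proof.
move=> c0; set d := h - p / c; set E := expR (- (r - p ^+ 2 / c) / 2).
have -> : (fun t => (a + b * (t - h)) * expR (- (c * (t - h) ^+ 2 + 2 * p * (t - h) + r) / 2))
  = (fun t => ((a - b * p / c) * E) * gauss_fun c d t + (b * E) * ((t - d) * gauss_fun c d t)).
  apply/funext => t.
  have -> : expR (- (c * (t - h) ^+ 2 + 2 * p * (t - h) + r) / 2) = E * gauss_fun c d t.
    by rewrite /E /gauss_fun -expRD; congr expR; rewrite /d; field; rewrite gt_eqF.
  by rewrite /d; field; rewrite gt_eqF.
rewrite RintegralD //; last 2 first.
- exact: (integrableZl measurableT _ (integrable_gauss_fun d c0)).
- exact: (integrableZl measurableT _ (integrable_centered_gauss d c0)).
rewrite RintegralZl //; last exact: integrable_gauss_fun.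
rewrite RintegralZl //; last exact: integrable_centered_gauss.
by rewrite Rintegral_centered_gauss // mulr0 addr0 Rintegral_gauss_fun // mulrAC.
Qed.

End GaussianIntegrals.

Section Coordinates.
Variables (R : realType) (n : nat).
Implicit Types (u v b : 'cV[R]_n) (A Q : 'M[R]_n) (j k : 'I_n).

Definition dotv b u : R := \sum_k b k 0 * u k 0.

Definition quad_form Q u : R := (u^T *m Q *m u) 0 0.

Lemma dotvD b u v : dotv b (u + v) = dotv b u + dotv b v.
Proof. by rewrite /dotv -big_split; apply: eq_bigr => k _; rewrite mxE mulrDr. Qed.

Lemma dotvB b u v : dotv b (u - v) = dotv b u - dotv b v.
Proof. by rewrite /dotv -sumrB; apply: eq_bigr => k _; rewrite !mxE mulrBr. Qed.

Lemma dotvZ (c : R) b u : dotv (c *: b) u = c * dotv b u.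
Proof. by rewrite /dotv mulr_sumr; apply: eq_bigr => k _; rewrite mxE mulrA. Qed.

Lemma dot0v u : dotv 0 u = 0.
Proof. by rewrite /dotv big1 // => k _; rewrite mxE mul0r. Qed.

Lemma mulmx_colE A u i : (A *m u) i 0 = \sum_k A i k * u k 0.
Proof. by rewrite mxE. Qed.

Lemma quad_formE Q u : quad_form Q u = \sum_k u k 0 * (Q *m u) k 0.
Proof. by rewrite /quad_form -mulmxA mxE; apply: eq_bigr => k _; rewrite mxE. Qed.

Lemma sym_sum_mul Q u j : Q^T = Q -> \sum_k u k 0 * Q k j = (Q *m u) j 0.
Proof.
by move=> sQ; rewrite mulmx_colE; apply: eq_bigr => k _; rewrite -[in RHS]sQ mxE mulrC.
Qed.

Lemma setcoordE u j a k : setcoord u j a k 0 = if k == j then a else u k 0.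
Proof. by rewrite mxE. Qed.

Lemma setcoordB u v j (a : R) : setcoord u j a - v = setcoord (u - v) j (a - v j 0).
Proof.
by apply/matrixP => k l; rewrite (ord1 l) !(setcoordE, mxE); case: eqP => [->|].
Qed.

Lemma sum_mul_setcoord (f : 'I_n -> R) u j a :
  \sum_k f k * setcoord u j a k 0 = \sum_k f k * u k 0 + f j * (a - u j 0).
Proof.
rewrite (bigD1 j) //= [X in _ = X + _](bigD1 j) //= setcoordE eqxx.
rewrite (eq_bigr (fun k => f k * u k 0)) => [|k /negbTE kj]; last by rewrite setcoordE kj.
by ring.
Qed.

Lemma mulmx_setcoord A u j a i :
  (A *m setcoord u j a) i 0 = (A *m u) i 0 + A i j * (a - u j 0).
Proof. by rewrite !mulmx_colE sum_mul_setcoord. Qed.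

Lemma dotv_setcoord b u j a : dotv b (setcoord u j a) = dotv b u + b j 0 * (a - u j 0).
Proof. exact: sum_mul_setcoord. Qed.

Lemma quad_form_setcoord Q u j a : Q^T = Q ->
  quad_form Q (setcoord u j a)
  = quad_form Q u + 2 * (a - u j 0) * (Q *m u) j 0 + (a - u j 0) ^+ 2 * Q j j.
Proof.
move=> sQ; rewrite !quad_formE.
under eq_bigr do rewrite mulmx_setcoord mulrDr.
rewrite big_split /=.
have sum_setcoord_mul (f : 'I_n -> R) :
    \sum_k setcoord u j a k 0 * f k = \sum_k u k 0 * f k + (a - u j 0) * f j.
  under eq_bigr do rewrite mulrC.
  by rewrite sum_mul_setcoord mulrC; congr (_ + _); apply: eq_bigr => k _; rewrite mulrC.
rewrite !sum_setcoord_mul.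
have -> : \sum_k u k 0 * (Q k j * (a - u j 0)) = (a - u j 0) * (Q *m u) j 0.
  by rewrite -(sym_sum_mul u j sQ) mulr_sumr; apply: eq_bigr => k _; ring.
by ring.
Qed.

Definition schur_compl Q j : 'M[R]_n := \matrix_(i, k) (Q i k - Q i j * Q j k / Q j j).

Definition schur_compl_vec b Q j : 'cV[R]_n := \col_k (b k 0 - b j 0 * Q j k / Q j j).

Lemma schur_compl_sym Q j : Q^T = Q -> (schur_compl Q j)^T = schur_compl Q j.
Proof.
move=> sQ; have Qsym k1 k2 : Q k1 k2 = Q k2 k1 by rewrite -[in LHS]sQ mxE.
by apply/matrixP => i k; rewrite !mxE (Qsym k i) (Qsym k j) (Qsym j i); ring.
Qed.

Lemma mulmx_schur_compl Q j u i :
  (schur_compl Q j *m u) i 0 = (Q *m u) i 0 - Q i j * (Q *m u) j 0 / Q j j.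
Proof.
rewrite !mulmx_colE; under eq_bigr do rewrite mxE mulrBl.
rewrite sumrB mulrAC -mulrA big_distrr /= mulr_sumr.
by congr (_ - _); apply: eq_bigr => k _; ring.
Qed.

Lemma dotv_schur_compl_vec b Q j u :
  dotv (schur_compl_vec b Q j) u = dotv b u - b j 0 * (Q *m u) j 0 / Q j j.
Proof.
rewrite /dotv mulmx_colE; under eq_bigr do rewrite mxE mulrBl.
rewrite sumrB mulrAC -mulrA big_distrr /= mulr_sumr.
by congr (_ - _); apply: eq_bigr => k _; ring.
Qed.

Lemma quad_form_schur_compl Q j u : Q^T = Q ->
  quad_form (schur_compl Q j) u = quad_form Q u - ((Q *m u) j 0) ^+ 2 / Q j j.
Proof.
move=> sQ; rewrite !quad_formE.
under eq_bigr do rewrite mulmx_schur_compl mulrBr.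
rewrite sumrB; congr (_ - _).
rewrite (eq_bigr (fun k => u k 0 * Q k j * ((Q *m u) j 0 / Q j j))) => [|k _]; last by ring.
by rewrite -mulr_suml sym_sum_mul // mulrA expr2.
Qed.

End Coordinates.

Section Marginalization.
Variables (R : realType) (n : nat).
Implicit Types (u v b x nu : 'cV[R]_n) (Q : 'M[R]_n) (j k : 'I_n) (l : seq 'I_n).

Definition gauss_kernel Q nu x : R := expR (- quad_form Q (x - nu) / 2).

(* For the centred Gaussian with precision Q, such a v is the conditional mean
   of the coordinates in l given that the others are those of u. *)
Definition cond_point l Q u v :=
  (forall k, k \notin l -> v k 0 = u k 0) /\ (forall k, k \in l -> (Q *m v) k 0 = 0).

(* Integrating out the coordinates in l multiplies by K and replaces Q by the
   marginal precision Q', characterised by Q' u = Q v; b' is the pull-back of b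
   along u |-> v. *)
Record marginal_spec nu l Q (K : R) (Q' : 'M[R]_n) : Prop := MarginalSpec {
  marginal_mass_gt0 : 0 < K;
  marginal_sym : Q'^T = Q';
  marginal_cond : forall u v, cond_point l Q u v -> Q' *m u = Q *m v;
  marginal_cond_ex : forall u, exists v, cond_point l Q u v;
  marginal_affine : forall b, exists b',
    (forall u v, cond_point l Q u v -> dotv b' u = dotv b v) /\
    forall a x, iterint l (fun y => (a + dotv b (y - nu)) * gauss_kernel Q nu y) x
              = (a + dotv b' (x - nu)) * K * gauss_kernel Q' nu x }.

Lemma cond_point_nil Q u v : cond_point [::] Q u v -> v = u.
Proof. by move=> [agree _]; apply/matrixP => k i; rewrite (ord1 i) agree. Qed.

Lemma marginal_spec_nil nu Q : Q^T = Q -> marginal_spec nu [::] Q 1 Q.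
Proof.
move=> sQ; split => //.
- by move=> u v /cond_point_nil ->.
- by move=> u; exists u; split.
- move=> b; exists b; split=> [u v /cond_point_nil -> //|a x].
  by rewrite mulr1.
Qed.

Section MarginalCons.
Variables (nu : 'cV[R]_n) (j : 'I_n) (l : seq 'I_n) (Q Q' : 'M[R]_n) (K : R).
Hypotheses (pdQ : spd Q) (jl : j \notin l) (spec : marginal_spec nu l Q K Q').

Lemma cond_point_behead u v :
  cond_point (j :: l) Q u v -> cond_point l Q (setcoord u j (v j 0)) v.
Proof.
move=> [agree zero]; split=> k kl; last by apply: zero; rewrite in_cons kl orbT.
rewrite setcoordE; case: eqP => [-> //|/eqP kj].
by apply: agree; rewrite in_cons negb_or kj.
Qed.

Lemma marginal_pivot_gt0 : 0 < Q' j j.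
Proof.
have [v [agree zero]] := marginal_cond_ex spec (setcoord 0 j 1).
have e_j k : (setcoord 0 j 1 : 'cV[R]_n) k 0 = (k == j)%:R.
  by rewrite setcoordE mxE; case: (k == j).
have vj : v j 0 = 1 by rewrite agree // e_j eqxx.
have -> : Q' j j = (Q *m v) j 0.
  by rewrite -(marginal_cond spec (conj agree zero)) mulmx_setcoord mulmx0 mxE subr0 mulr1 add0r.
have <- : quad_form Q v = (Q *m v) j 0.
  rewrite quad_formE (bigD1 j) //= big1 ?addr0 ?vj ?mul1r // => k kj.
  case: (boolP (k \in l)) => kl; first by rewrite zero // mulr0.
  by rewrite agree // e_j (negbTE kj) mul0r.
apply: pdQ.2; apply: contra_neq (@oner_neq0 R) => v0.
by rewrite -vj v0 mxE.
Qed.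

Lemma marginal_cond_pivot u v : cond_point (j :: l) Q u v ->
  (Q' *m u) j 0 = - Q' j j * (v j 0 - u j 0).
Proof.
move=> cuv; have cj : (Q *m v) j 0 = 0 by apply: cuv.2; exact: mem_head.
move: cj; rewrite -(marginal_cond spec (cond_point_behead cuv)) mulmx_setcoord.
by move/eqP; rewrite addr_eq0 => /eqP ->; ring.
Qed.

Lemma marginal_affine_cons b : exists b'',
  (forall u v, cond_point (j :: l) Q u v -> dotv b'' u = dotv b v) /\
  forall a x, iterint (j :: l) (fun y => (a + dotv b (y - nu)) * gauss_kernel Q nu y) x
            = (a + dotv b'' (x - nu)) * (K * gauss_mass (Q' j j))
              * gauss_kernel (schur_compl Q' j) nu x.
Proof.
have c0 := marginal_pivot_gt0; set c := Q' j j in c0 *.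
have cn0 : c != 0 by rewrite gt_eqF.
have sQ' := marginal_sym spec.
have [b' [cond_b' int_b']] := marginal_affine spec b.
exists (schur_compl_vec b' Q' j); split.
  move=> u v cuv; rewrite -(cond_b' _ _ (cond_point_behead cuv)).
  by rewrite dotv_schur_compl_vec dotv_setcoord (marginal_cond_pivot cuv) -/c; field.
move=> a x /=; set u := x - nu; set h := nu j 0 + u j 0.
set p := (Q' *m u) j 0; set r := quad_form Q' u.
under eq_Rintegral => t _.
  rewrite int_b' /gauss_kernel setcoordB quad_form_setcoord // dotv_setcoord -/u -/c -/p -/r.
  have -> : t - nu j 0 - u j 0 = t - h by rewrite /h; ring.
  have -> : (a + (dotv b' u + b' j 0 * (t - h))) * K
             * expR (- (r + 2 * (t - h) * p + (t - h) ^+ 2 * c) / 2)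
    = ((a + dotv b' u) * K + b' j 0 * K * (t - h))
      * expR (- (c * (t - h) ^+ 2 + 2 * p * (t - h) + r) / 2).
    by congr (_ * expR (- _ / 2)); ring.
  over.
rewrite Rintegral_affine_gauss // /gauss_kernel -/u quad_form_schur_compl // -/c -/p -/r.
by rewrite dotv_schur_compl_vec -/c -/p; field.
Qed.

Lemma marginal_spec_cons :
  marginal_spec nu (j :: l) Q (K * gauss_mass (Q' j j)) (schur_compl Q' j).
Proof.
have c0 := marginal_pivot_gt0; set c := Q' j j in c0 *.
have cn0 : c != 0 by rewrite gt_eqF.
have sQ' := marginal_sym spec.
split.
- by rewrite mulr_gt0 ?gauss_mass_gt0 // (marginal_mass_gt0 spec).
- exact: schur_compl_sym.
- move=> u v cuv; apply/matrixP => i o; rewrite (ord1 o) mulmx_schur_compl.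
  rewrite -(marginal_cond spec (cond_point_behead cuv)) mulmx_setcoord.
  by rewrite (marginal_cond_pivot cuv) -/c; field.
- move=> u; set s := u j 0 - (Q' *m u) j 0 / c.
  have [v [agree zero]] := marginal_cond_ex spec (setcoord u j s).
  exists v; split=> k.
    by rewrite in_cons negb_or => /andP[kj kl]; rewrite agree // setcoordE (negbTE kj).
  rewrite in_cons => /orP[/eqP ->|kl]; last exact: zero.
  rewrite -(marginal_cond spec (conj agree zero)) mulmx_setcoord -/c /s.
  by field.
exact: marginal_affine_cons.
Qed.

End MarginalCons.

Lemma marginal_spec_exists nu l Q : uniq l -> spd Q -> exists K Q', marginal_spec nu l Q K Q'.
Proof.
move=> + pdQ; elim: l => [_|j l IH /= /andP[jl ul]].
  by exists 1, Q; exact: marginal_spec_nil pdQ.1.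
have [K [Q' spec]] := IH ul.
by exists (K * gauss_mass (Q' j j)), (schur_compl Q' j); exact: marginal_spec_cons.
Qed.

End Marginalization.

Section PositiveDefinite.
Variable R : realType.

Lemma spd_scalar1 m : spd (1%:M : 'M[R]_m).
Proof.
split=> [|v v0]; first exact: tr_scalar_mx.
rewrite mulmx1 mxE lt_def; apply/andP; split; last first.
  by apply: sumr_ge0 => k _; rewrite mxE -expr2 sqr_ge0.
apply/negP => /eqP /psumr_eq0P v2_0.
have {}v2_0 k : v^T 0 k * v k 0 = 0 by apply: v2_0 => // i _; rewrite mxE -expr2 sqr_ge0.
move/negP: v0; apply; apply/eqP/matrixP => k o; rewrite (ord1 o) mxE.
by have := v2_0 k; rewrite mxE -expr2 => /eqP; rewrite sqrf_eq0 => /eqP.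
Qed.

Lemma spd_convex m (A B : 'M[R]_m) (t : R) : spd A -> spd B -> 0 <= t <= 1 ->
  spd ((1 - t) *: A + t *: B).
Proof.
move=> [sA pdA] [sB pdB] /andP[t0 t1]; split=> [|v v0].
  by rewrite linearD !linearZ /= sA sB.
have -> : (v^T *m ((1 - t) *: A + t *: B) *m v) 0 0
    = (1 - t) * (v^T *m A *m v) 0 0 + t * (v^T *m B *m v) 0 0.
  by rewrite mulmxDr mulmxDl -!scalemxAr -!scalemxAl !mxE.
have qA := pdA v v0; have qB := pdB v v0.
have [->|tn0] := eqVneq t 0; first by rewrite subr0 mul1r mul0r addr0.
have : 0 < t * (v^T *m B *m v) 0 0 by rewrite mulr_gt0 // lt_def tn0.
have : 0 <= (1 - t) * (v^T *m A *m v) 0 0 by rewrite mulr_ge0 ?subr_ge0 // ltW.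
lra.
Qed.

Lemma spd_det_neq0 m (A : 'M[R]_m) : spd A -> \det A != 0.
Proof.
move=> [_ pdA]; apply/negP => /det0P [w w0 wA].
by have := pdA w^T; rewrite trmx_eq0 trmxK wA mul0mx mxE ltxx => /(_ w0).
Qed.

(* det ((1 - t) I + t A) is a polynomial in t which cannot vanish on [0, 1]. *)
Lemma spd_det_gt0 m (A : 'M[R]_m) : spd A -> 0 < \det A.
Proof.
move=> pdA; pose P := \det (\matrix_(i, k) ((1 - 'X) * (i == k)%:R + 'X * (A i k)%:P)).
have PE t : P.[t] = \det ((1 - t) *: 1%:M + t *: A).
  rewrite /P -horner_evalE -det_map_mx; congr (\det _); apply/matrixP => i k.
  by rewrite !mxE /= horner_evalE; case: (i == k); rewrite !hornerE /=; ring.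
rewrite lt_def spd_det_neq0 //= leNgt; apply/negP => det_lt0.
have sign_change : (- P).[0] <= 0 <= (- P).[1].
  rewrite !hornerN !PE subr0 subrr !scale0r !scale1r addr0 add0r det1 lerN10 /=.
  by rewrite oppr_ge0 ltW.
have [t /andP[t0 t1]] := poly_ivt ler01 sign_change.
rewrite /root hornerN oppr_eq0 PE; apply/negP.
by apply: spd_det_neq0; apply: spd_convex => //; [exact: spd_scalar1 | apply/andP].
Qed.

Lemma spd_unitmx m (A : 'M[R]_m) : spd A -> A \in unitmx.
Proof. by move=> pdA; rewrite unitmxE unitfE spd_det_neq0. Qed.

Lemma spd_invmx m (A : 'M[R]_m) : spd A -> spd (invmx A).
Proof.
move=> pdA; have uA := spd_unitmx pdA; split=> [|v v0]; first by rewrite trmx_inv pdA.1.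
have -> : v^T *m invmx A *m v = (invmx A *m v)^T *m A *m (invmx A *m v).
  by rewrite trmx_mul trmx_inv pdA.1 -!mulmxA mulKVmx.
by apply: pdA.2; apply: contra_neq v0 => Av0; rewrite -(mulKVmx uA v) Av0 mulmx0.
Qed.

Lemma spd_congr m k (A : 'M[R]_m) (P : 'M[R]_(m, k)) :
  spd A -> (forall v : 'cV_k, P *m v = 0 -> v = 0) -> spd (P^T *m A *m P).
Proof.
move=> [sA pdA] Pinj; split=> [|v v0]; first by rewrite !trmx_mul trmxK sA mulmxA.
rewrite -!mulmxA mulmxA -trmx_mul mulmxA; apply: pdA.
by apply: contra_neq v0; exact: Pinj.
Qed.

End PositiveDefinite.

Section ConditionalMean.
Variables (R : realType) (n : nat).
Implicit Types (S : {set 'I_n}) (Sigma : 'M[R]_n) (u : 'cV[R]_n).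

Lemma selmxE S i k : selmx R S i k = (i == enum_val k)%:R.
Proof. by rewrite mxE. Qed.

Lemma selmx_mul_enum_val S (v : 'cV[R]_#|S|) r : (selmx R S *m v) (enum_val r) 0 = v r 0.
Proof.
rewrite mxE (bigD1 r) //= selmxE eqxx mul1r big1 ?addr0 // => k kr.
by rewrite selmxE (inj_eq enum_val_inj) eq_sym (negbTE kr) mul0r.
Qed.

Lemma tr_selmx_mul S u r : ((selmx R S)^T *m u) r 0 = u (enum_val r) 0.
Proof.
rewrite mxE (bigD1 (enum_val r)) //= mxE selmxE eqxx mul1r big1 ?addr0 // => k kr.
by rewrite mxE selmxE (negbTE kr) mul0r.
Qed.

Lemma selmx_mul_notin S m (M : 'M[R]_(#|S|, m)) k c : k \notin S -> (selmx R S *m M) k c = 0.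
Proof.
move=> kS; rewrite mxE big1 // => r _; rewrite selmxE.
by case: eqP => [kr|]; [by move: kS; rewrite kr enum_valP | rewrite mul0r].
Qed.

Lemma spd_selmx Sigma S : spd Sigma -> spd ((selmx R S)^T *m Sigma *m selmx R S).
Proof.
move=> pdS; apply: spd_congr => // v Sv0; apply/matrixP => r o.
by rewrite (ord1 o) -selmx_mul_enum_val Sv0 !mxE.
Qed.

Lemma Ahat_mul_in Sigma S u k : spd Sigma -> k \in S -> (Ahat Sigma S *m u) k 0 = u k 0.
Proof.
move=> pdS kS; have uS := spd_unitmx (spd_selmx S pdS).
have selAhat : (selmx R S)^T *m Ahat Sigma S = (selmx R S)^T.
  by rewrite /Ahat !mulmxA mulmxV // mul1mx.
by rewrite -(enum_rankK_in kS kS) -!tr_selmx_mul mulmxA selAhat.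
Qed.

Lemma invmx_Ahat_mul_notin Sigma S u k : spd Sigma -> k \notin S ->
  (invmx Sigma *m (Ahat Sigma S *m u)) k 0 = 0.
Proof.
move=> pdS kS; rewrite /Ahat !mulmxA mulVmx ?spd_unitmx // mul1mx -!mulmxA.
exact: selmx_mul_notin.
Qed.

Lemma cond_point_Ahat Sigma S u : spd Sigma ->
  cond_point (enum (~: S)) (invmx Sigma) u (Ahat Sigma S *m u).
Proof.
move=> pdS; split=> k; rewrite mem_enum inE.
  by rewrite negbK => kS; exact: Ahat_mul_in.
exact: invmx_Ahat_mul_notin.
Qed.

Lemma gauss_condexp_affine mu Sigma S (a : R) (b x : 'cV[R]_n) : spd Sigma ->
  gauss_condexp mu Sigma S (fun y => a + dotv b y) x
  = a + dotv b (mu + Ahat Sigma S *m (x - mu)).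
Proof.
move=> pdS; set Q := invmx Sigma.
set C := (Num.sqrt ((2 * pi) ^+ n * \det Sigma))^-1.
have C0 : 0 < C.
  by rewrite invr_gt0 sqrtr_gt0 mulr_gt0 ?spd_det_gt0 // exprn_gt0 // mulr_gt0 ?pi_gt0.
have pdfE y : gauss_pdf mu Sigma y = C * gauss_kernel Q mu y.
  by rewrite /gauss_pdf /gauss_kernel /quad_form mulrC.
have [K [Q' spec]] := marginal_spec_exists mu (enum_uniq (mem (~: S))) (spd_invmx pdS).
have [b1 [cond_b1 int_b1]] := marginal_affine spec (C *: b).
have [b0 [cond_b0 int_b0]] := marginal_affine spec 0.
have cuv := cond_point_Ahat S (x - mu) pdS.
have numE : (fun y => (a + dotv b y) * gauss_pdf mu Sigma y)
    = (fun y => (C * (a + dotv b mu) + dotv (C *: b) (y - mu)) * gauss_kernel Q mu y).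
  by apply/funext => y; rewrite pdfE dotvZ dotvB; ring.
have denE : gauss_pdf mu Sigma = (fun y => (C + dotv 0 (y - mu)) * gauss_kernel Q mu y).
  by apply/funext => y; rewrite pdfE dot0v addr0.
rewrite /gauss_condexp numE denE int_b1 int_b0 (cond_b1 _ _ cuv) (cond_b0 _ _ cuv) dot0v addr0 dotvZ dotvD.
have K0 := marginal_mass_gt0 spec.
have G0 : 0 < gauss_kernel Q' mu x by exact: expR_gt0.
by field; rewrite !gt_eqF.
Qed.

Lemma vf_affine m (B0 : 'cV[R]_m) (B : 'M[R]_(n, m)) mu Sigma x S : spd Sigma ->
  vf mu Sigma (fun y => B0 + B^T *m y) x S
  = B^T *m ((Ahat Sigma S - Ahat Sigma finset.set0) *m (x - mu)).
Proof.
move=> pdS; have trmx_mulE (w : 'cV[R]_n) k : (B^T *m w) k 0 = dotv (\col_j B j k) w.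
  by rewrite mxE; apply: eq_bigr => j _; rewrite !mxE.
apply/matrixP => k o; rewrite (ord1 o) mxE.
under eq_fun => y do rewrite mxE trmx_mulE.
rewrite !gauss_condexp_affine // trmx_mulE mulmxBl dotvB !dotvD.
by ring.
Qed.

End ConditionalMean.

Theorem mainTheorem10 (R : realType) (n m : nat)
    (B0 : 'cV[R]_m) (B : 'M[R]_(n, m)) (mu : 'cV[R]_n) (Sigma : 'M[R]_n) :
  spd Sigma ->
  forall (x : 'cV[R]_n) (i : 'I_n),
    shap mu Sigma (fun y : 'cV[R]_n => B0 + B^T *m y) x i
    = B^T *m Mi Sigma i *m (x - mu).
Proof.
move=> pdS x i; rewrite /shap /Mi mulmx_sumr mulmx_suml; apply: eq_bigr => S _.
rewrite !vf_affine // -scalemxAr -scalemxAl -mulmxBr -mulmxBl opprB addrA subrK.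
by rewrite mulmxA.
Qed.
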